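(* There exist instances of arbitrarily large size of scheduling a single job with a general DAG dependency graph such that the optimal makespan is $\Omega(\sqrt{\mu_j}(\Delta_j+T_j))$; that is, there is a constant $\kappa>0$ such that for arbitrarily large $\mu_j$ there is a single-job instance with $\mu_j$ coflows whose optimal makespan is at least $\kappa\sqrt{\mu_j}(\Delta_j+T_j)$.
   Context: Model. $m$ servers, each a sender and a receiver. A coflow is an $m\times m$ nonnegative integer matrix $(d_{sr})$ of unit packets from sender $s$ to receiver $r$. A job $j$ has $\mu_j$ coflows $\mathcal{D}^{(cj)}$ and a DAG $G_j$; edge $c_1\to c_2$ means no packet of $c_2$ is sent before all packets of $c_1$ are sent. Each slot, each sender sends at most one packet and each receiver receives at most one. The makespan of a feasible schedule is the end of its last used slot. Effective size of a coflow: $D=\max\{\max_s\sum_rd_{sr},\max_r\sum_sd_{sr}\}$. $\Delta_j$ is the effective size of $\sum_c\mathcal{D}^{(cj)}$; $T_j$ is the maximum over directed paths in $G_j$ of the sum of effective sizes of the coflows on the path. *)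

From mathcomp Require Import all_boot.
Set Implicit Arguments. Unset Strict Implicit. Unset Printing Implicit Defensive.

(* A single job: m servers, mu coflows, coflow c is the m x m nat matrix
   (fun s r => D c s r) of unit packets from sender s to receiver r;
   E is the edge relation of the dependency graph G_j on coflows. *)
#[local] Unset Implicit Arguments.
Record job := Job {
  nserv : nat;
  mu : nat;
  coflow : 'I_mu -> 'I_nserv -> 'I_nserv -> nat;
  dep : rel 'I_mu
}.
#[local] Set Implicit Arguments.

Definition is_dag (J : job) : Prop :=
  forall c1 c2 : 'I_(mu J), dep J c1 c2 -> ~~ connect (dep J) c2 c1.

Definition coflows_nonempty (J : job) : Prop :=
  forall c : 'I_(mu J), exists s r, 0 < coflow J c s r.

Definition eff_size (m : nat) (d : 'I_m -> 'I_m -> nat) : nat :=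
  maxn (\max_(s < m) \sum_(r < m) d s r) (\max_(r < m) \sum_(s < m) d s r).

Definition Delta_j (J : job) : nat :=
  eff_size (fun s r => \sum_(c < mu J) coflow J c s r).

Definition ceff (J : job) (c : 'I_(mu J)) : nat := eff_size (coflow J c).

(* In a DAG every
   directed path has at most mu vertices, i.e. k < mu edges. *)
Definition T_j (J : job) : nat :=
  \max_(k < mu J) \max_(c0 : 'I_(mu J))
     \max_(t : k.-tuple 'I_(mu J) | path (dep J) c0 t)
        (ceff c0 + \sum_(c <- t) ceff c).

(* A schedule assigns to the k-th packet (k < d_sr) from s to r of coflow c
   its time slot sched c s r k; slot t >= 1 is the time interval [t-1, t]. *)
Definition schedule (J : job) := 'I_(mu J) -> 'I_(nserv J) -> 'I_(nserv J) -> nat -> nat.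

Definition feasible (J : job) (sched : schedule J) : Prop :=
  (forall c s r k, k < coflow J c s r -> 1 <= sched c s r k) /\
  (forall c c' s r r' k k', k < coflow J c s r -> k' < coflow J c' s r' ->
     (c, r, k) <> (c', r', k') -> sched c s r k <> sched c' s r' k') /\
  (forall c c' s s' r k k', k < coflow J c s r -> k' < coflow J c' s' r ->
     (c, s, k) <> (c', s', k') -> sched c s r k <> sched c' s' r k') /\
  (forall c1 c2, dep J c1 c2 ->
     forall s r k s' r' k', k < coflow J c1 s r -> k' < coflow J c2 s' r' ->
       sched c1 s r k < sched c2 s' r' k').

Definition makespan (J : job) (sched : schedule J) : nat :=
  \max_(c < mu J) \max_(s < nserv J) \max_(r < nserv J)
     \max_(k < coflow J c s r) sched c s r k.

(* Take n.+1 * n.+1 one-packet coflows arranged in an n.+1 x n.+1 grid: the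
   coflow in cell (i, j) sends its packet from sender i to receiver j, and
   every coflow of row i.+1 depends on every coflow of row i.  All packets of
   a row leave the same sender, so a row occupies n.+1 distinct slots, and
   the rows are processed one after another: the makespan is at least
   (n.+1)^2.  On the other hand each coflow has effective size 1, a path
   visits at most one coflow per row, and the total demand is the all-ones
   matrix, so Delta_j and T_j are both at most n.+1 = sqrt mu_j. *)
From mathcomp Require Import all_boot.
From Stdlib Require Import Reals.
From mathcomp Require Import zify.
From Stdlib Require Import Lra.
Set Implicit Arguments. Unset Strict Implicit.

Lemma sum_eq_indicator (T : finType) (x : T) : \sum_(y : T) ((y == x) : nat) = 1.
Proof. by rewrite (bigD1 x) //= eqxx big1 // => y /negbTE ->. Qed.

Lemma eff_size_le (m b : nat) (d : 'I_m -> 'I_m -> nat) :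
  (forall s r, d s r <= b) -> eff_size d <= m * b.
Proof.
move=> le_db; have sum_le (F : 'I_m -> nat) : (forall i, F i <= b) -> \sum_i F i <= m * b.
  move=> le_Fb; apply: (@leq_trans (\sum_(i < m) b)); first exact: leq_sum.
  by rewrite sum_nat_const card_ord.
by rewrite geq_max; apply/andP; split; apply/bigmax_leqP => i _; apply: sum_le => j.
Qed.

Lemma eff_size_unit_le1 (m : nat) (a b : 'I_m) :
  eff_size (fun s r => ((s == a) && (r == b)) : nat) <= 1.
Proof.
rewrite /eff_size geq_max; apply/andP; split; apply/bigmax_leqP => i _.
- by rewrite -(sum_eq_indicator b) leq_sum // => r _; do 2 case: eqP.
- by rewrite -(sum_eq_indicator a) leq_sum // => s _; do 2 case: eqP.
Qed.

Lemma path_rank_last (T : Type) (e : rel T) (f : T -> nat) :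
  (forall x y, e x y -> f y = (f x).+1) ->
  forall x p, path e x p -> f (last x p) = f x + size p.
Proof.
move=> e_succ x p; elim: p x => [|y p IHp] x /=; first by rewrite addn0.
by case/andP=> /e_succ exy /IHp ->; rewrite exy addSnnS.
Qed.

Lemma injective_ord_ge (m L : nat) (f : 'I_m.+1 -> nat) :
  injective f -> (forall j, L < f j) -> exists j, L + m.+1 <= f j.
Proof.
move=> inj_f gt_fL.
case: (boolP [exists j, L + m.+1 <= f j]) => [/existsP //|/existsPn small].
have : size (map f (enum 'I_m.+1)) <= size (iota L.+1 m).
  apply: uniq_leq_size; first by rewrite map_inj_uniq ?enum_uniq.
  move=> _ /mapP [j _ ->]; rewrite mem_iota gt_fL /= addSnnS ltnNge; exact: small.
by rewrite size_map size_enum_ord size_iota ltnn.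
Qed.

Section Grid.

Variable n : nat.
Local Notation k := n.+1.

Lemma grid_row_subproof (c : 'I_(k * k)) : c %/ k < k.
Proof. by rewrite ltn_divLR. Qed.

Lemma grid_cell_subproof (i j : 'I_k) : i * k + j < k * k.
Proof. have := ltn_ord i; have := ltn_ord j; nia. Qed.

Definition grid_row (c : 'I_(k * k)) : 'I_k := Ordinal (grid_row_subproof c).
Definition grid_col (c : 'I_(k * k)) : 'I_k := Ordinal (ltn_pmod c (ltn0Sn n)).
Definition grid_cell (i j : 'I_k) : 'I_(k * k) := Ordinal (grid_cell_subproof i j).

Lemma grid_row_cell i j : grid_row (grid_cell i j) = i.
Proof. by apply: val_inj; rewrite /= divnMDl // divn_small ?addn0. Qed.

Lemma grid_col_cell i j : grid_col (grid_cell i j) = j.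
Proof. by apply: val_inj; rewrite /= modnMDl modn_small. Qed.

Lemma grid_cellP c i j : (i == grid_row c) && (j == grid_col c) = (c == grid_cell i j).
Proof.
apply/andP/eqP => [[/eqP -> /eqP ->] | ->]; last by rewrite grid_row_cell grid_col_cell.
by apply: val_inj; rewrite /= -divn_eq.
Qed.

Definition grid_job : job :=
  Job k (k * k) (fun c s r => ((s == grid_row c) && (r == grid_col c)) : nat)
      (fun c1 c2 => grid_row c2 == (grid_row c1).+1 :> nat).

Lemma grid_packet (c : 'I_(mu grid_job)) :
  0 < coflow grid_job c (grid_row c) (grid_col c).
Proof. by rewrite /= !eqxx. Qed.

Lemma grid_cell_packet i j : 0 < coflow grid_job (grid_cell i j) i j.
Proof. by rewrite /= grid_row_cell grid_col_cell !eqxx. Qed.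

Lemma grid_path_row (c : 'I_(mu grid_job)) p :
  path (dep grid_job) c p -> grid_row (last c p) = grid_row c + size p :> nat.
Proof.
by apply: (path_rank_last (f := fun c : 'I_(k * k) => val (grid_row c))) => ? ? /eqP.
Qed.

Lemma grid_dag : is_dag grid_job.
Proof.
move=> c1 c2 /eqP row_c2; apply/negP => /connectP [p /grid_path_row + last_c1].
by rewrite -last_c1 row_c2; lia.
Qed.

Lemma grid_T_le : T_j grid_job <= k.
Proof.
apply/bigmax_leqP => m _; apply/bigmax_leqP => c0 _; apply/bigmax_leqP => t path_t.
have := ltn_ord (grid_row (last c0 t)); rewrite grid_path_row // size_tuple => row_lt.
have m_lt : m < k by apply: leq_ltn_trans row_lt; rewrite leq_addl.
apply: leq_trans m_lt; rewrite -add1n leq_add ?eff_size_unit_le1 //.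
by rewrite -{2}(size_tuple t) -sum1_size leq_sum // => c _; apply: eff_size_unit_le1.
Qed.

Lemma grid_Delta_le : Delta_j grid_job <= k.
Proof.
rewrite -[k in _ <= k]muln1; apply: eff_size_le => s r /=.
by under eq_bigr do rewrite grid_cellP; rewrite sum_eq_indicator.
Qed.

Lemma grid_packet_slot_le_makespan (sched : schedule grid_job) c :
  sched c (grid_row c) (grid_col c) 0 <= makespan sched.
Proof.
apply: leq_trans (leq_bigmax c); apply: leq_trans (leq_bigmax (grid_row c)).
apply: leq_trans (leq_bigmax (grid_col c)).
exact: (leq_bigmax (F := fun l : 'I_(coflow grid_job c _ _) => sched c _ _ l)
                   (Ordinal (grid_packet c))).
Qed.

Section FeasibleSchedule.

Variable sched : schedule grid_job.
Hypothesis sched_feasible : feasible sched.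

Let slot (i j : 'I_k) := sched (grid_cell i j) i j 0.

Lemma grid_slotE i j :
  slot i j = sched (grid_cell i j) (grid_row (grid_cell i j)) (grid_col (grid_cell i j)) 0.
Proof. by rewrite grid_row_cell grid_col_cell. Qed.

Lemma grid_slot_injective i : injective (slot i).
Proof.
have [_ [sender_once _]] := sched_feasible.
move=> j1 j2 eq_slot; case: (eqVneq j1 j2) => // neq_j; exfalso.
apply: (sender_once _ _ _ _ _ 0 0 (grid_cell_packet i j1) (grid_cell_packet i j2) _ eq_slot).
by case=> _ eq_j; rewrite eq_j eqxx in neq_j.
Qed.

Lemma grid_slot_row_lt (i i' : 'I_k) j j' : i' = i.+1 :> nat -> slot i j < slot i' j'.
Proof.
have [_ [_ [_ precedence]]] := sched_feasible.
move=> row_succ.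
apply: (precedence _ _ _ _ _ _ _ _ _ (grid_cell_packet i j) (grid_cell_packet i' j')).
by apply/eqP; rewrite !grid_row_cell row_succ.
Qed.

Lemma grid_row_slot_spread i L : (forall j, L < slot i j) -> exists j, L + k <= slot i j.
Proof. exact: injective_ord_ge (@grid_slot_injective i). Qed.

Lemma grid_row_slot_ge i (lt_ik : i < k) : exists j, k * i.+1 <= slot (Ordinal lt_ik) j.
Proof.
elim: i lt_ik => [|i IHi] lt_ik.
  have [positive _] := sched_feasible.
  have [j] := grid_row_slot_spread (i := Ordinal lt_ik)
                (fun j => positive _ _ _ 0 (grid_cell_packet _ j)).
  by exists j; rewrite muln1.
have [j0 le_j0] := IHi (ltnW lt_ik).
have row_lt j : slot (Ordinal (ltnW lt_ik)) j0 < slot (Ordinal lt_ik) j.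
  exact: grid_slot_row_lt.
have [j] := grid_row_slot_spread (fun j => leq_ltn_trans le_j0 (row_lt j)).
by exists j; rewrite mulnSr.
Qed.

Lemma grid_makespan_ge : k * k <= makespan sched.
Proof.
have [j] := grid_row_slot_ge (ltnSn n); rewrite grid_slotE => le_slot.
exact: leq_trans le_slot (grid_packet_slot_le_makespan _ _).
Qed.

End FeasibleSchedule.

End Grid.

Theorem lemma2 :
  exists kappa : R, (0 < kappa)%R /\
    forall N : nat, exists J : job,
      (N <= mu J)%N /\ is_dag J /\ coflows_nonempty J /\
      forall sched : schedule J, feasible sched ->
        (kappa * sqrt (INR (mu J)) * INR (Delta_j J + T_j J) <= INR (makespan sched))%R.
Proof.
exists (/ 2)%R; split; first lra.
move=> N; exists (grid_job N); split; first by rewrite /=; nia.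
split; first exact: grid_dag.
split; first by move=> c; exists (grid_row c), (grid_col c); apply: grid_packet.
move=> sched feas.
have le_nat : N.+1 * (Delta_j (grid_job N) + T_j (grid_job N)) <= 2 * makespan sched.
  apply: leq_trans (leq_mul (leqnn 2) (grid_makespan_ge feas)).
  by rewrite mulnCA leq_mul2l mul2n -addnn leq_add ?grid_Delta_le ?grid_T_le.
change (mu (grid_job N)) with (N.+1 * N.+1).
move/leP/le_INR: le_nat; rewrite !mult_INR sqrt_square ?[INR 2]/=; first lra.
exact: pos_INR.
Qed.
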